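(* Let $x$ be a propositional variable and $\bot$ denote the constant $0$. Then (i) $x\leftrightarrow(\Box x)^2,\ \Box(x\leftrightarrow(\Box x)^2),\ \neg\Diamond\Box\bot\ \vdash_{4\mathcal{K}_{\omega\text{Ł}}}\ \neg x\vee x$; and (ii) $x\leftrightarrow(\Box x)^2,\ \Box(x\leftrightarrow(\Box x)^2),\ \neg\Diamond\Box\bot\ \not\vdash_{4\mathcal{K}_{\text{Ł}}}\ \neg x\vee x$.
   Context: $[0,1]_{\text{Ł}}$ is the standard MV-algebra on $[0,1]$ ($\wedge=\min$, $\vee=\max$, $a\cdot b=\max\{0,a+b-1\}$, $a\to b=\min\{1,1-a+b\}$, constants $0,1$); for $n\ge1$, $MV_n$ is its subalgebra on $\{0,\frac1n,\dots,\frac nn\}$. Modal formulas use $\wedge,\vee,\cdot,\to,0,1,\Box,\Diamond$; $x^2=x\cdot x$, $\neg x=x\to0$, $x\leftrightarrow y=(x\to y)\cdot(y\to x)$. An $\mathbf{A}$-Kripke model is $\langle W,R,e\rangle$ with $W\ne\emptyset$, crisp $R\subseteq W^2$, $e$ valuing variables at worlds in $\mathbf{A}$, extended world-wise homomorphically and by $e(v,\Box\varphi)=\inf_{Rvw}e(w,\varphi)$, $e(v,\Diamond\varphi)=\sup_{Rvw}e(w,\varphi)$ (the model being safe, i.e. these exist). $4\mathcal{K}_{\text{Ł}}$ is the class of $[0,1]_{\text{Ł}}$-Kripke models with transitive $R$; $4\mathcal{K}_{\omega\text{Ł}}$ is the class of safe Kripke models with transitive $R$ over some $MV_n$, $n\in\omega$.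 $\Gamma\vdash_{\mathcal{C}}\varphi$ means: for every model in $\mathcal{C}$ and world $v$, if all formulas of $\Gamma$ have value $1$ at $v$ then $\varphi$ has value $1$ at $v$. *)

From Stdlib Require Import Reals List.
Open Scope R_scope.

Inductive form : Type :=
| FVar : nat -> form
| FBot : form
| FTop : form
| FAnd : form -> form -> form
| FOr  : form -> form -> form
| FMul : form -> form -> form
| FImp : form -> form -> form
| FBox : form -> form
| FDia : form -> form.

Definition FSq (a : form) : form := FMul a a.
Definition FNeg (a : form) : form := FImp a FBot.
Definition FIff (a b : form) : form := FMul (FImp a b) (FImp b a).

(* Carriers of the MV-algebras, as subsets of the reals:
   [0,1]_L and MV_n = {0, 1/n, ..., n/n}.  Operations are the
   Lukasiewicz ones restricted to the carrier. *)
Definition A_L (x : R) : Prop := 0 <= x <= 1.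
Definition A_MV (n : nat) (x : R) : Prop :=
  exists k : nat, (k <= n)%nat /\ x = INR k / INR n.

Definition is_inf_in (A : R -> Prop) (S : R -> Prop) (r : R) : Prop :=
  A r /\ (forall s, S s -> r <= s) /\
  (forall t, A t -> (forall s, S s -> t <= s) -> t <= r).
Definition is_sup_in (A : R -> Prop) (S : R -> Prop) (r : R) : Prop :=
  A r /\ (forall s, S s -> s <= r) /\
  (forall t, A t -> (forall s, S s -> s <= t) -> r <= t).

Record kmodel (A : R -> Prop) : Type := {
  world : Type;
  world_ne : inhabited world;
  rel : world -> world -> Prop;
  val : nat -> world -> R;
  val_in : forall p w, A (val p w)
}.
Arguments world {A}.
Arguments rel {A}.
Arguments val {A}.

(* ev M phi w r : "phi has value r at world w of M" (relational, since the
   modal clauses are infima/suprema that need not exist a priori). *)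
Fixpoint ev {A : R -> Prop} (M : kmodel A) (phi : form) : world M -> R -> Prop :=
  match phi with
  | FVar p => fun w r => r = val M p w
  | FBot => fun _ r => r = 0
  | FTop => fun _ r => r = 1
  | FAnd a b => fun w r => exists x y, ev M a w x /\ ev M b w y /\ r = Rmin x y
  | FOr a b => fun w r => exists x y, ev M a w x /\ ev M b w y /\ r = Rmax x y
  | FMul a b => fun w r => exists x y, ev M a w x /\ ev M b w y /\ r = Rmax 0 (x + y - 1)
  | FImp a b => fun w r => exists x y, ev M a w x /\ ev M b w y /\ r = Rmin 1 (1 - x + y)
  | FBox a => fun w r => is_inf_in A (fun s => exists w', rel M w w' /\ ev M a w' s) r
  | FDia a => fun w r => is_sup_in A (fun s => exists w', rel M w w' /\ ev M a w' s) r
  end.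

Definition safe {A : R -> Prop} (M : kmodel A) : Prop :=
  forall phi w, exists r, ev M phi w r.

Definition transitive_rel {A : R -> Prop} (M : kmodel A) : Prop :=
  forall u v w, rel M u v -> rel M v w -> rel M u w.

Definition holds_in {A : R -> Prop} (M : kmodel A) (G : list form) (phi : form) : Prop :=
  forall v : world M, (forall g, In g G -> ev M g v 1) -> ev M phi v 1.

Definition ent_4KL (G : list form) (phi : form) : Prop :=
  forall M : kmodel A_L, safe M -> transitive_rel M -> holds_in M G phi.

Definition ent_4KomegaL (G : list form) (phi : form) : Prop :=
  forall n : nat, (1 <= n)%nat ->
  forall M : kmodel (A_MV n), safe M -> transitive_rel M -> holds_in M G phi.

(* Write x(w) = max(0, 2 b(w) - 1) with b(w) the infimum of x over the successors of w.
   If 0 < x(w) < 1 then x(w) < b(w) < 1.  In MV_n infima over nonempty sets are attained,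
   and the premises make every successor of v a non-dead-end satisfying the same
   equation, so a non-crisp value in the cone of v would start an infinite strictly
   increasing chain in {0, 1/n, ..., 1}; hence x is crisp there and then at v.
   Over [0,1] the chain 0 < 1 < 2 < ... with x(i) = 1 - 2^-(i+1) satisfies the premises
   at 0, where x = 1/2. *)

From Stdlib Require Import Reals List Lra Lia Classical.
Import ListNotations.
Open Scope R_scope.

Definition box_sq_fix (p : nat) : form := FIff (FVar p) (FSq (FBox (FVar p))).

Definition box_sq_premises (p : nat) : list form :=
  [box_sq_fix p; FBox (box_sq_fix p); FNeg (FDia (FBox FBot))].

Definition excluded_middle (p : nat) : form := FOr (FNeg (FVar p)) (FVar p).

Section UnitLattice.

Context {A : R -> Prop} (A_unit : forall r, A r -> 0 <= r <= 1).

Lemma is_inf_in_unique S r r' : is_inf_in A S r -> is_inf_in A S r' -> r = r'.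
Proof.
  intros [Ar [Lr Gr]] [Ar' [Lr' Gr']].
  apply Rle_antisym; [apply Gr' | apply Gr]; assumption.
Qed.

Lemma is_sup_in_unique S r r' : is_sup_in A S r -> is_sup_in A S r' -> r = r'.
Proof.
  intros [Ar [Ur Lr]] [Ar' [Ur' Lr']].
  apply Rle_antisym; [apply Lr | apply Lr']; assumption.
Qed.

Lemma is_inf_in_top S : A 1 -> (forall s, S s -> 1 <= s) -> is_inf_in A S 1.
Proof.
  intros A1 HS. split; [exact A1 | split; [exact HS |]].
  intros t At _. apply A_unit, At.
Qed.

Lemma is_sup_in_bot S : A 0 -> (forall s, S s -> s <= 0) -> is_sup_in A S 0.
Proof.
  intros A0 HS. split; [exact A0 | split; [exact HS |]].
  intros t At _. apply A_unit, At.
Qed.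

Lemma is_inf_in_empty S r : A 1 -> (forall s, ~ S s) -> is_inf_in A S r -> r = 1.
Proof.
  intros A1 HS Hr. apply (is_inf_in_unique S); [exact Hr |].
  apply is_inf_in_top; [exact A1 |]. intros s Hs. destruct (HS s Hs).
Qed.

End UnitLattice.

Section Evaluation.

Context {A : R -> Prop} (A_unit : forall r, A r -> 0 <= r <= 1).
Context {M : kmodel A}.

Lemma ev_functional phi w r r' : ev M phi w r -> ev M phi w r' -> r = r'.
Proof.
  revert w r r'.
  induction phi; simpl; intros w r r' H H'; try (subst; lra).
  1-4: destruct H as (a & b & Ha & Hb & ->), H' as (a' & b' & Ha' & Hb' & ->);
       rewrite (IHphi1 _ _ _ Ha Ha'), (IHphi2 _ _ _ Hb Hb'); reflexivity.
  - exact (is_inf_in_unique _ _ _ H H').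
  - exact (is_sup_in_unique _ _ _ H H').
Qed.

Lemma ev_in_unit phi w r : ev M phi w r -> 0 <= r <= 1.
Proof.
  revert w r.
  induction phi; simpl; intros w r H; try lra.
  2-5: destruct H as (a & b & Ha & Hb & ->);
       apply IHphi1 in Ha; apply IHphi2 in Hb;
       unfold Rmin, Rmax; destruct Rle_dec; lra.
  - subst. apply A_unit, val_in.
  - apply A_unit, H.
  - apply A_unit, H.
Qed.

Lemma ev_iff_1 a b w :
  ev M (FIff a b) w 1 -> exists r, ev M a w r /\ ev M b w r.
Proof.
  intros [i [j [Hi [Hj E]]]].
  pose proof (ev_in_unit _ _ _ Hi). pose proof (ev_in_unit _ _ _ Hj).
  assert (i = 1 /\ j = 1) as [-> ->].
  { unfold Rmax in E; destruct Rle_dec; lra. }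
  destruct Hi as [x [y [Hx [Hy Exy]]]], Hj as [y' [x' [Hy' [Hx' Eyx]]]].
  rewrite (ev_functional _ _ _ _ Hx' Hx), (ev_functional _ _ _ _ Hy' Hy) in Eyx.
  assert (x = y) as ->.
  { unfold Rmin in Exy, Eyx; do 2 destruct Rle_dec; lra. }
  exists y; split; assumption.
Qed.

Lemma ev_iff_of_eq a b w r : ev M a w r -> ev M b w r -> ev M (FIff a b) w 1.
Proof.
  intros Ha Hb. exists 1, 1.
  assert (Hr : 1 = Rmin 1 (1 - r + r)) by (unfold Rmin; destruct Rle_dec; lra).
  split; [exists r, r; auto | split; [exists r, r; auto |]].
  unfold Rmax; destruct Rle_dec; lra.
Qed.

Lemma ev_neg_1 a w : ev M (FNeg a) w 1 -> ev M a w 0.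
Proof.
  intros [r [z [Hr [Hz E]]]]. simpl in Hz; subst z.
  pose proof (ev_in_unit _ _ _ Hr).
  replace 0 with r; [exact Hr |]. unfold Rmin in E; destruct Rle_dec; lra.
Qed.

Lemma ev_neg_of_0 a w : ev M a w 0 -> ev M (FNeg a) w 1.
Proof.
  intros Ha. exists 0, 0. split; [exact Ha | split; [reflexivity |]].
  unfold Rmin; destruct Rle_dec; lra.
Qed.

Lemma ev_box_1 a w w' : safe M -> ev M (FBox a) w 1 -> rel M w w' -> ev M a w' 1.
Proof.
  intros Msafe [_ [L _]] Hw'. destruct (Msafe a w') as [r Hr].
  assert (1 <= r) by (apply L; exists w'; auto).
  pose proof (ev_in_unit _ _ _ Hr).
  replace 1 with r by lra. exact Hr.
Qed.

Lemma ev_box_of_1 a w : A 1 -> (forall w', rel M w w' -> ev M a w' 1) -> ev M (FBox a) w 1.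
Proof.
  intros A1 Ha. apply (is_inf_in_top A_unit); [exact A1 |].
  intros s [w' [Hw' Hs]]. rewrite (ev_functional _ _ _ _ Hs (Ha w' Hw')). lra.
Qed.

Lemma ev_dia_0 a w w' : safe M -> ev M (FDia a) w 0 -> rel M w w' -> ev M a w' 0.
Proof.
  intros Msafe [_ [U _]] Hw'. destruct (Msafe a w') as [r Hr].
  assert (r <= 0) by (apply U; exists w'; auto).
  pose proof (ev_in_unit _ _ _ Hr).
  replace 0 with r by lra. exact Hr.
Qed.

Lemma ev_dia_of_0 a w : A 0 -> (forall w', rel M w w' -> ev M a w' 0) -> ev M (FDia a) w 0.
Proof.
  intros A0 Ha. apply (is_sup_in_bot A_unit); [exact A0 |].
  intros s [w' [Hw' Hs]]. rewrite (ev_functional _ _ _ _ Hs (Ha w' Hw')). lra.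
Qed.

(* At a dead end the infimum is over the empty set, hence the top element [1]. *)
Lemma ev_box_bot_0 w : A 1 -> ev M (FBox FBot) w 0 -> exists w', rel M w w'.
Proof.
  intros A1 H. apply NNPP. intros Hdead.
  assert (Hempty : forall s, ~ exists w', rel M w w' /\ ev M FBot w' s).
  { intros s [w' [Hw' _]]. apply Hdead. exists w'. exact Hw'. }
  pose proof (is_inf_in_empty A_unit _ _ A1 Hempty H). lra.
Qed.

Lemma ev_box_bot_of_succ w w' : A 0 -> rel M w w' -> ev M (FBox FBot) w 0.
Proof.
  intros A0 Hw'. split; [exact A0 | split].
  - intros s [u [_ Hs]]. simpl in Hs. lra.
  - intros t _ Ht. apply Ht. exists w'. split; [exact Hw' | reflexivity].
Qed.

Lemma ev_box_sq_fix_1 p w :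
  ev M (box_sq_fix p) w 1 <->
  exists b, is_inf_in A (fun s => exists w', rel M w w' /\ s = val M p w') b /\
            val M p w = Rmax 0 (b + b - 1).
Proof.
  split.
  - intros H. destruct (ev_iff_1 _ _ _ H) as [r [Hx [b [b' [Hb [Hb' E]]]]]].
    rewrite <- (ev_functional _ _ _ _ Hb Hb') in E.
    exists b. split; [exact Hb | simpl in Hx; congruence].
  - intros [b [Hb E]]. apply (ev_iff_of_eq _ _ _ (val M p w)); [reflexivity |].
    exists b, b. auto.
Qed.

Lemma ev_excluded_middle_1 p w :
  ev M (excluded_middle p) w 1 -> val M p w = 0 \/ val M p w = 1.
Proof.
  intros [r [x [[x' [z [Hx' [Hz Er]]]] [Hx E]]]]. simpl in Hx, Hx', Hz. subst.
  pose proof (A_unit _ (val_in _ M p w)).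
  unfold Rmax, Rmin in *; do 2 destruct Rle_dec; lra.
Qed.

Lemma ev_excluded_middle_of_crisp p w :
  val M p w = 0 \/ val M p w = 1 -> ev M (excluded_middle p) w 1.
Proof.
  intros Hcrisp. exists (Rmin 1 (1 - val M p w + 0)), (val M p w).
  split; [exists (val M p w), 0; repeat split | split; [reflexivity |]].
  destruct Hcrisp as [-> | ->]; unfold Rmin, Rmax; repeat destruct Rle_dec; lra.
Qed.

End Evaluation.

Section MVCarrier.

Variable n : nat.
Hypothesis n_pos : (1 <= n)%nat.

Let n_gt0 : 0 < INR n.
Proof. apply lt_0_INR. lia. Qed.

Lemma A_MV_unit r : A_MV n r -> 0 <= r <= 1.
Proof.
  intros [k [Hk ->]].
  assert (INR k <= INR n) by (apply le_INR; exact Hk).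
  pose proof (pos_INR k).
  split.
  - apply Rmult_le_pos; [lra | left; apply Rinv_0_lt_compat; lra].
  - apply Rmult_le_reg_r with (INR n); [lra |].
    unfold Rdiv. rewrite Rmult_assoc, Rinv_l; lra.
Qed.

Lemma A_MV_1 : A_MV n 1.
Proof. exists n. split; [lia | field; lra]. Qed.

Lemma A_MV_gap r s : A_MV n r -> A_MV n s -> r < s -> r + / INR n <= s.
Proof.
  intros [a [_ ->]] [b [_ ->]] Hlt.
  assert (Hab : INR a < INR b).
  { apply (Rmult_lt_reg_r (/ INR n)); [apply Rinv_0_lt_compat; lra | exact Hlt]. }
  assert (INR a + 1 <= INR b).
  { rewrite <- S_INR. apply le_INR. apply INR_lt in Hab. lia. }
  assert (0 < / INR n) by (apply Rinv_0_lt_compat; lra).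
  unfold Rdiv. nra.
Qed.

Lemma A_MV_succ r : A_MV n r -> r < 1 -> A_MV n (r + / INR n).
Proof.
  intros [a [_ ->]] Hlt. exists (S a). split.
  - apply INR_lt. apply (Rmult_lt_reg_r (/ INR n)); [apply Rinv_0_lt_compat; lra |].
    rewrite Rinv_r; lra.
  - rewrite S_INR. field. lra.
Qed.

Lemma is_inf_in_MV_attained S b :
  (forall s, S s -> A_MV n s) -> (exists s, S s) -> is_inf_in (A_MV n) S b -> S b.
Proof.
  intros HS [s0 Hs0] [Ab [Lb Gb]].
  apply NNPP. intros Hnb.
  assert (Hgap : forall s, S s -> b + / INR n <= s).
  { intros s Hs. apply A_MV_gap; [exact Ab | exact (HS s Hs) |].
    destruct (Lb s Hs) as [Hlt | ->]; [exact Hlt | contradiction]. }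
  assert (b + / INR n <= b).
  { apply Gb; [| exact Hgap].
    apply A_MV_succ; [exact Ab |].
    pose proof (Hgap s0 Hs0). pose proof (A_MV_unit _ (HS s0 Hs0)).
    pose proof (Rinv_0_lt_compat _ n_gt0). lra. }
  pose proof (Rinv_0_lt_compat _ n_gt0). lra.
Qed.

(* Each step up gains at least [1/n], so [n + 1] steps would leave [[0,1]]. *)
Lemma A_MV_no_ascending_chain (Q : R -> Prop) :
  (forall r, Q r -> A_MV n r) -> (forall r, Q r -> exists r', Q r' /\ r < r') ->
  forall r, ~ Q r.
Proof.
  intros HQ Hasc.
  assert (Hclimb : forall m r, Q r -> r + INR m * / INR n <= 1).
  { induction m as [| m IH]; intros r Hr.
    - rewrite Rmult_0_l, Rplus_0_r. apply A_MV_unit, HQ, Hr.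
    - destruct (Hasc r Hr) as [r' [Hr' Hlt]].
      pose proof (A_MV_gap r r' (HQ r Hr) (HQ r' Hr') Hlt).
      pose proof (IH r' Hr').
      rewrite S_INR, Rmult_plus_distr_r, Rmult_1_l. lra. }
  intros r Hr.
  pose proof (Hclimb (S n) r Hr) as Hclimb'. pose proof (A_MV_unit r (HQ r Hr)).
  rewrite S_INR, Rmult_plus_distr_r, Rinv_r, Rmult_1_l in Hclimb' by lra.
  pose proof (Rinv_0_lt_compat _ n_gt0). lra.
Qed.

End MVCarrier.

Section MVModels.

Variable n : nat.
Hypothesis n_pos : (1 <= n)%nat.
Variable M : kmodel (A_MV n).
Hypothesis M_safe : safe M.
Hypothesis M_trans : transitive_rel M.
Variables (p : nat) (v : world M).
Hypothesis v_fix : ev M (box_sq_fix p) v 1.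
Hypothesis v_box_fix : ev M (FBox (box_sq_fix p)) v 1.
Hypothesis v_serial : ev M (FNeg (FDia (FBox FBot))) v 1.

Let MV_unit := A_MV_unit n n_pos.

Lemma succ_inf_attained w b :
  is_inf_in (A_MV n) (fun s => exists w', rel M w w' /\ s = val M p w') b ->
  (exists w', rel M w w') -> exists w', rel M w w' /\ b = val M p w'.
Proof.
  intros Hb [w1 Hw1].
  refine (is_inf_in_MV_attained n n_pos
            (fun s => exists w', rel M w w' /\ s = val M p w') b _ _ Hb).
  - intros s [w' [_ ->]]. apply val_in.
  - exists (val M p w1), w1. auto.
Qed.

Lemma box_sq_fix_witness w :
  ev M (box_sq_fix p) w 1 -> (exists w', rel M w w') ->
  exists w', rel M w w' /\ val M p w = Rmax 0 (val M p w' + val M p w' - 1).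
Proof.
  intros Hfix Hsucc.
  destruct (proj1 (ev_box_sq_fix_1 MV_unit p w) Hfix) as [b [Hb E]].
  destruct (succ_inf_attained w b Hb Hsucc) as [w' [Hw' ->]].
  exists w'. auto.
Qed.

Lemma cone_serial w : rel M v w -> exists w', rel M w w'.
Proof.
  intros Hw. apply (ev_box_bot_0 MV_unit); [apply A_MV_1; exact n_pos |].
  exact (ev_dia_0 MV_unit _ _ _ M_safe (ev_neg_1 MV_unit _ _ v_serial) Hw).
Qed.

Lemma cone_crisp w : rel M v w -> val M p w = 0 \/ val M p w = 1.
Proof.
  set (Q r := exists w, rel M v w /\ r = val M p w /\ 0 < r < 1).
  assert (HQ : forall r, Q r -> A_MV n r) by (intros r [u [_ [-> _]]]; apply val_in).
  assert (Hasc : forall r, Q r -> exists r', Q r' /\ r < r').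
  { intros r [u [Hu [-> Hr]]].
    destruct (box_sq_fix_witness u (ev_box_1 MV_unit _ _ _ M_safe v_box_fix Hu)
                (cone_serial u Hu)) as [u' [Huu' E]].
    pose proof (MV_unit _ (val_in _ M p u')).
    assert (val M p u < val M p u' < 1) by (unfold Rmax in E; destruct Rle_dec; lra).
    exists (val M p u'). split; [| lra].
    exists u'. split; [exact (M_trans _ _ _ Hu Huu') | split; [reflexivity | lra]]. }
  intros Hw. pose proof (MV_unit _ (val_in _ M p w)).
  apply NNPP. intros Hnc.
  apply (A_MV_no_ascending_chain n n_pos Q HQ Hasc (val M p w)).
  exists w. repeat split; auto; lra.
Qed.

Lemma root_crisp : val M p v = 0 \/ val M p v = 1.
Proof.
  destruct (proj1 (ev_box_sq_fix_1 MV_unit p v) v_fix) as [b [Hb E]].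
  assert (Hb01 : b = 0 \/ b = 1).
  { destruct (classic (exists w, rel M v w)) as [Hsucc | Hdead].
    - destruct (succ_inf_attained v b Hb Hsucc) as [w' [Hw' ->]].
      exact (cone_crisp w' Hw').
    - assert (Hempty : forall s, ~ exists w, rel M v w /\ s = val M p w).
      { intros s [w [Hw _]]. apply Hdead. exists w. exact Hw. }
      right. exact (is_inf_in_empty MV_unit _ _ (A_MV_1 n n_pos) Hempty Hb). }
  rewrite E. destruct Hb01 as [-> | ->]; unfold Rmax; destruct Rle_dec; lra.
Qed.

End MVModels.

Lemma ent_4KomegaL_excluded_middle p :
  ent_4KomegaL (box_sq_premises p) (excluded_middle p).
Proof.
  intros n n_pos M M_safe M_trans v Hprem.
  apply ev_excluded_middle_of_crisp.
  apply (root_crisp n n_pos M M_safe M_trans p v); apply Hprem; simpl; auto.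
Qed.

Lemma is_sup_in_unit_exists S :
  (forall s, S s -> 0 <= s <= 1) -> exists r, is_sup_in A_L S r.
Proof.
  intros HS. destruct (classic (exists s, S s)) as [[s0 Hs0] | Hempty].
  - destruct (completeness S) as [m [Hub Hlub]].
    + exists 1. intros s Hs. apply HS, Hs.
    + exists s0. exact Hs0.
    + exists m. pose proof (Hub s0 Hs0). pose proof (HS s0 Hs0).
      assert (m <= 1) by (apply Hlub; intros s Hs; apply HS, Hs).
      split; [split; lra | split; [exact Hub |]].
      intros t _ Ht. apply Hlub. exact Ht.
  - exists 0. split; [split; lra | split].
    + intros s Hs. destruct Hempty. exists s. exact Hs.
    + intros t [Ht _] _. exact Ht.
Qed.

Lemma is_inf_in_unit_exists S :
  (forall s, S s -> 0 <= s <= 1) -> exists r, is_inf_in A_L S r.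
Proof.
  intros HS.
  destruct (is_sup_in_unit_exists (fun u => S (1 - u))) as [m [Am [Um Lm]]].
  { intros u Hu. pose proof (HS _ Hu). lra. }
  exists (1 - m). unfold A_L in *. split; [lra | split].
  - intros s Hs. assert (1 - s <= m); [| lra]. apply Um.
    replace (1 - (1 - s)) with s by ring. exact Hs.
  - intros t Ht Hlow. assert (m <= 1 - t); [| lra]. apply Lm; [lra |].
    intros u Hu. pose proof (Hlow _ Hu). lra.
Qed.

Lemma A_L_unit r : A_L r -> 0 <= r <= 1.
Proof. exact (fun H => H). Qed.

Lemma kmodel_L_safe (M : kmodel A_L) : safe M.
Proof.
  intros phi. induction phi; intros w; simpl.
  1-3: eexists; reflexivity.
  1-4: destruct (IHphi1 w) as [a Ha], (IHphi2 w) as [b Hb]; eexists; exists a, b; eauto.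
  - apply is_inf_in_unit_exists. intros s [w' [_ Hs]]. exact (ev_in_unit A_L_unit _ _ _ Hs).
  - apply is_sup_in_unit_exists. intros s [w' [_ Hs]]. exact (ev_in_unit A_L_unit _ _ _ Hs).
Qed.

Definition half_chain (i : nat) : R := 1 - / 2 ^ S i.

Lemma half_chain_unit i : A_L (half_chain i).
Proof.
  unfold A_L, half_chain.
  assert (Hpow : 1 <= 2 ^ S i) by (apply pow_R1_Rle; lra).
  pose proof (Rinv_0_lt_compat (2 ^ S i) ltac:(lra)).
  pose proof (Rinv_le_contravar 1 (2 ^ S i) ltac:(lra) Hpow) as Hinv.
  rewrite Rinv_1 in Hinv. lra.
Qed.

Lemma half_chain_le i j : (i <= j)%nat -> half_chain i <= half_chain j.
Proof.
  intros Hij. unfold half_chain.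
  assert (Hpow : 2 ^ S i <= 2 ^ S j) by (apply Rle_pow; [lra | lia]).
  pose proof (Rinv_le_contravar _ _ (pow_lt 2 (S i) ltac:(lra)) Hpow). lra.
Qed.

Lemma half_chain_sq i : half_chain i = Rmax 0 (half_chain (S i) + half_chain (S i) - 1).
Proof.
  assert (Hsq : half_chain (S i) + half_chain (S i) - 1 = half_chain i).
  { unfold half_chain. change (2 ^ S (S i)) with (2 * 2 ^ S i).
    field. apply pow_nonzero. lra. }
  rewrite Hsq. pose proof (half_chain_unit i) as [Hnonneg _].
  unfold Rmax; destruct Rle_dec; lra.
Qed.

Definition chain_model : kmodel A_L :=
  {| world := nat; world_ne := inhabits 0%nat; rel := lt;
     val := fun _ => half_chain; val_in := fun _ => half_chain_unit |}.

Lemma chain_model_box_sq_fix p i : ev chain_model (box_sq_fix p) i 1.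
Proof.
  apply (ev_box_sq_fix_1 A_L_unit). exists (half_chain (S i)). split; [| apply half_chain_sq].
  split; [apply half_chain_unit | split].
  - intros s [j [Hj ->]]. apply half_chain_le. exact Hj.
  - intros t _ Ht. apply Ht. exists (S i). split; [simpl; lia | reflexivity].
Qed.

Lemma not_ent_4KL_excluded_middle p : ~ ent_4KL (box_sq_premises p) (excluded_middle p).
Proof.
  intros Hent.
  assert (A0 : A_L 0) by (unfold A_L; lra).
  assert (A1 : A_L 1) by (unfold A_L; lra).
  assert (Hprem : forall g, In g (box_sq_premises p) -> ev chain_model g 0%nat 1).
  { intros g Hg. simpl in Hg. destruct Hg as [<- | [<- | [<- | []]]].
    - apply chain_model_box_sq_fix.
    - apply (ev_box_of_1 A_L_unit); [exact A1 |]. intros w _. apply chain_model_box_sq_fix.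
    - apply ev_neg_of_0, (ev_dia_of_0 A_L_unit); [exact A0 |]. intros w _.
      apply (ev_box_bot_of_succ w (S w : world chain_model)); [exact A0 | simpl; lia]. }
  assert (Htrans : transitive_rel chain_model) by (intros u v w; simpl; lia).
  pose proof (Hent chain_model (kmodel_L_safe _) Htrans 0%nat Hprem) as Hem.
  apply (ev_excluded_middle_1 A_L_unit) in Hem. simpl in Hem.
  unfold half_chain in Hem. simpl in Hem. lra.
Qed.

Theorem mainTheorem5 :
  let x := FVar 0 in
  let G := [FIff x (FSq (FBox x)); FBox (FIff x (FSq (FBox x))); FNeg (FDia (FBox FBot))] in
  ent_4KomegaL G (FOr (FNeg x) x) /\ ~ ent_4KL G (FOr (FNeg x) x).
Proof.
  split.
  - exact (ent_4KomegaL_excluded_middle 0).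
  - exact (not_ent_4KL_excluded_middle 0).
Qed.
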